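(* For a positive integer $n$ and $1\le k\le n+1$, say that $k$ is reconstructing (resp. directed-reconstructing) for $n$ if any two permutations of $[n]\cup\{0,n+1\}$ having the same $k$-profile (resp. the same directed $k$-profile) are equal, i.e. every $k$-profile (resp. directed $k$-profile) is the $k$-profile of at most one permutation. Let $k_u(n)$ (resp. $k_d(n)$) be the minimum reconstructing (resp. directed-reconstructing) $k$. Then: (a) $k_u(n)=\max\{1,n-3\}$; (b) $k_d(n)\ge \lceil (n-3)/2\rceil$ for $n\ge 4$, and $k_d(n)=1$ for $n=1,2,3$.
   Context: $[n]=\{1,\dots,n\}$. Permutations are of $[n]\cup\{0,n+1\}$, always with $0$ at the leftmost position and $n+1$ at the rightmost position. For a permutation $P$ and elements $t<t+i$, let $\min_{t,t+i}$ and $\max_{t,t+i}$ be the minimum and maximum of the elements located on $P$ in the interval delimited by the element $t$ (included) and the element $t+i$ (included). The $k$-profile of $P$ ($1\le k\le n+1$) is the set of constraints $\{(t,t+i,[\min_{t,t+i},\max_{t,t+i}]) : 1\le i\le k,\ 0\le t\le n+1-i\}$ (no information on which of $t$, $t+i$ is to the left). The directed $k$-profile of $P$ consists of the same constraints together with, for each such pair, the information whether $t$ is to the left or to the right of $t+i$ in $P$. *)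

From mathcomp Require Import all_boot all_order all_fingroup.
Unset Printing Implicit Defensive.

(* A permutation of [n] ∪ {0, n+1} is P : 'S_(n.+2), read as
   position p ↦ element (val (P p)); positions are 0..n+1 left to right. *)

Definition valid_perm n (P : 'S_(n.+2)) : Prop :=
  P ord0 = ord0 /\ P ord_max = ord_max.

Definition posn n (P : 'S_(n.+2)) (x : nat) : nat :=
  val ((P^-1)%g (inord x : 'I_(n.+2))).

Definition imin n (P : 'S_(n.+2)) (t u : nat) : nat :=
  \big[minn/n.+1]_(p < n.+2 | minn (posn n P t) (posn n P u) <= p <= maxn (posn n P t) (posn n P u))
     val (P p).
Definition imax n (P : 'S_(n.+2)) (t u : nat) : nat :=
  \max_(p < n.+2 | minn (posn n P t) (posn n P u) <= p <= maxn (posn n P t) (posn n P u))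
     val (P p).

Definition same_profile n k (P Q : 'S_(n.+2)) : Prop :=
  forall i t, 1 <= i <= k -> t + i <= n.+1 ->
    imin n P t (t + i) = imin n Q t (t + i) /\ imax n P t (t + i) = imax n Q t (t + i).

Definition same_dprofile n k (P Q : 'S_(n.+2)) : Prop :=
  forall i t, 1 <= i <= k -> t + i <= n.+1 ->
    [/\ imin n P t (t + i) = imin n Q t (t + i),
        imax n P t (t + i) = imax n Q t (t + i) &
        (posn n P t < posn n P (t + i)) = (posn n Q t < posn n Q (t + i))].

Definition reconstructing n k : Prop :=
  forall P Q : 'S_(n.+2), valid_perm n P -> valid_perm n Q -> same_profile n k P Q -> P = Q.

Definition dreconstructing n k : Prop :=
  forall P Q : 'S_(n.+2), valid_perm n P -> valid_perm n Q -> same_dprofile n k P Q -> P = Q.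

Definition is_ku n k : Prop :=
  [/\ 1 <= k <= n.+1, reconstructing n k &
      forall k', 1 <= k' < k -> ~ reconstructing n k'].

Definition is_kd n k : Prop :=
  [/\ 1 <= k <= n.+1, dreconstructing n k &
      forall k', 1 <= k' < k -> ~ dreconstructing n k'].

From mathcomp Require Import all_boot all_order all_fingroup.
From mathcomp Require Import zify.
From Stdlib Require Import Classical.

(* Let [j] be the first position where two valid permutations [P] and [Q]
   with the same [k]-profile differ, [a = P(j)], [b = Q(j)] and
   [c = P(j-1) = Q(j-1)].  If [|c - a| <= k], then [c] and [a] are adjacent in
   [P], so the constraint on [(c, a)] forces [b], which lies between [c] and
   [a] in [Q], to lie between them in value; symmetrically [a] lies between [c]
   and [b] in value, which is absurd.  Hence [a] and [b] are both at distance
   more than [k >= n - 3] from [c]; this leaves four configurations, each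
   refuted by a few more constraints.  For [n <= 4], [k = 1] is checked
   exhaustively.

   For the lower bounds, the permutation [0, 3, .., n - 1 (without y), 1, n,
   2, y, n + 1] and the one with [2] and [y] exchanged have the same
   constraints [(t, t + i)] for [i < n - y]: the segments of such a pair in
   the two permutations differ at most by [2] or [y], which are then flanked
   by a smaller and a larger common element.  The directions agree too when
   moreover [i < y - 2].  Take [y = 3] for [k_u], and [y = k + 3] for [k_d]. *)

Set Implicit Arguments.
Unset Strict Implicit.
Unset Printing Implicit Defensive.

Lemma bigmin_nat_le_cond (I : finType) (C : pred I) (F : I -> nat) x0 j :
  C j -> \big[minn/x0]_(i | C i) F i <= F j.
Proof.
have : j \in index_enum I by rewrite mem_index_enum.
elim: (index_enum I) => // a r IH; rewrite inE big_cons; case/orP => [/eqP<-|jr] Cj.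
  by rewrite Cj geq_minl.
case: (C a); last exact: IH.
by rewrite geq_min IH ?orbT.
Qed.

Lemma bigmin_nat_eq_arg (I : finType) (C : pred I) (F : I -> nat) x0 j :
  C j -> F j <= x0 -> exists2 i, C i & \big[minn/x0]_(i | C i) F i = F i.
Proof.
move=> Cj le_x0.
have : \big[minn/x0]_(i | C i) F i = x0 \/ exists2 i, C i & \big[minn/x0]_(i | C i) F i = F i.
  apply: (big_ind (fun v => v = x0 \/ exists2 i, C i & v = F i)) => [|a b|i Ci].
  - by left.
  - move=> [->|[i Ci ->]] [->|[i' Ci' ->]].
    + by left; rewrite minnn.
    + by case: (leqP x0 (F i')) => h; [left|right; exists i']; lia.
    + by case: (leqP x0 (F i)) => h; [left|right; exists i]; lia.
    + by case: (leqP (F i) (F i')) => h; right; [exists i|exists i']; lia.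
  - by right; exists i.
case=> // e; exists j => //; have := bigmin_nat_le_cond F x0 Cj; lia.
Qed.

Section Positions.
Variable n : nat.
Implicit Types (P Q : 'S_(n.+2)) (t u v x y : nat).

Definition entry P i : nat := val (P (inord i)).

Definition between P t u v :=
  minn (posn n P t) (posn n P u) <= posn n P v <= maxn (posn n P t) (posn n P u).

Lemma posn_le P x : posn n P x <= n.+1.
Proof. by rewrite -ltnS ltn_ord. Qed.

Lemma entry_le P i : entry P i <= n.+1.
Proof. by rewrite -ltnS ltn_ord. Qed.

Lemma entry_posn P x : x <= n.+1 -> entry P (posn n P x) = x.
Proof. by move=> hx; rewrite /entry /posn inord_val permKV; apply: inordK. Qed.

Lemma posn_entry P i : i <= n.+1 -> posn n P (entry P i) = i.
Proof. by move=> hi; rewrite /entry /posn inord_val permK; apply: inordK. Qed.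

Lemma posn_inj P x y : x <= n.+1 -> y <= n.+1 -> posn n P x = posn n P y -> x = y.
Proof. by move=> hx hy e; rewrite -(entry_posn P hx) -(entry_posn P hy) e. Qed.

Lemma entry_inj P i j : i <= n.+1 -> j <= n.+1 -> entry P i = entry P j -> i = j.
Proof. by move=> hi hj e; rewrite -(posn_entry P hi) -(posn_entry P hj) e. Qed.

Lemma posn_neq P x y : x <= n.+1 -> y <= n.+1 -> x != y -> posn n P x != posn n P y.
Proof. by move=> hx hy; apply: contra => /eqP /(posn_inj hx hy) ->. Qed.

Lemma valid_posn0 P : valid_perm n P -> posn n P 0 = 0.
Proof.
case=> h0 _; rewrite /posn.
have -> : (inord 0 : 'I_n.+2) = ord0 by apply/val_inj; rewrite /= inordK.
by rewrite -{1}h0 permK.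
Qed.

Lemma valid_posnN P : valid_perm n P -> posn n P n.+1 = n.+1.
Proof.
case=> _ hN; rewrite /posn.
have -> : (inord n.+1 : 'I_n.+2) = ord_max by apply/val_inj; rewrite /= inordK.
by rewrite -{1}hN permK.
Qed.

Lemma valid_entry0 P : valid_perm n P -> entry P 0 = 0.
Proof. by move=> vP; rewrite -{1}(valid_posn0 vP) entry_posn. Qed.

Lemma valid_entryN P : valid_perm n P -> entry P n.+1 = n.+1.
Proof. by move=> vP; rewrite -{1}(valid_posnN vP) entry_posn. Qed.

Lemma valid_posn_gt0 P x : valid_perm n P -> x <= n.+1 -> x != 0 -> 0 < posn n P x.
Proof. by move=> vP hx /(posn_neq P hx (leq0n _)); rewrite valid_posn0 // lt0n. Qed.

Lemma valid_posn_ltN P x : valid_perm n P -> x <= n.+1 -> x != n.+1 -> posn n P x <= n.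
Proof.
move=> vP hx /(posn_neq P hx (leqnn _)); rewrite valid_posnN //.
by have := posn_le P x; lia.
Qed.

Lemma between_l P t u : between P t u t.
Proof. rewrite /between; lia. Qed.

Lemma betweenC P t u v : between P t u v = between P u t v.
Proof. by rewrite /between minnC maxnC. Qed.

Lemma between_adjacent P x y w : x <= n.+1 -> y <= n.+1 -> w <= n.+1 ->
  posn n P y = (posn n P x).+1 -> between P x y w -> w = x \/ w = y.
Proof.
rewrite /between => hx hy hw e hs.
have [/(posn_inj hw hx)|/(posn_inj hw hy)] :
    posn n P w = posn n P x \/ posn n P w = posn n P y by lia.
  by left.
by right.
Qed.

Definition segment P t u (p : 'I_n.+2) : bool :=
  minn (posn n P t) (posn n P u) <= p <= maxn (posn n P t) (posn n P u).

Lemma imin_le P t u v : v <= n.+1 -> between P t u v -> imin n P t u <= v.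
Proof.
move=> hv hs; have := @bigmin_nat_le_cond _ (segment P t u) (fun p => val (P p)) n.+1 _ hs.
by rewrite /= permKV inordK.
Qed.

Lemma imax_ge P t u v : v <= n.+1 -> between P t u v -> v <= imax n P t u.
Proof.
move=> hv hs; have := @leq_bigmax_cond _ (segment P t u) (fun p => val (P p)) _ hs.
by rewrite /= permKV inordK.
Qed.

Lemma imin_attained P t u : t <= n.+1 ->
  exists v, [/\ v <= n.+1, between P t u v & imin n P t u = v].
Proof.
move=> ht; have hs : between P t u t := between_l P t u.
rewrite /imin; have [p Cp ->] := @bigmin_nat_eq_arg _ (segment P t u) (fun p => val (P p)) n.+1 _ hs
  ltac:(by rewrite /= permKV inordK).
by exists (val (P p)); rewrite /between /posn inord_val permK -ltnS ltn_ord.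
Qed.

Lemma imax_attained P t u :
  exists v, [/\ v <= n.+1, between P t u v & imax n P t u = v].
Proof.
have hs : between P t u t := between_l P t u.
rewrite /imax; have [p Cp ->] := @eq_bigmax_cond _ (segment P t u) (fun p => val (P p))
  (ltac:(by apply/card_gt0P; exists ((P^-1)%g (inord t)))).
by exists (val (P p)); rewrite /between /posn inord_val permK -ltnS ltn_ord.
Qed.

Lemma iminC P t u : imin n P t u = imin n P u t.
Proof. by rewrite /imin minnC maxnC. Qed.

Lemma imaxC P t u : imax n P t u = imax n P u t.
Proof. by rewrite /imax minnC maxnC. Qed.

End Positions.

Arguments imin_attained {n} P t u.
Arguments imax_attained {n} P t u.

Section SameProfile.
Variables (n k : nat) (P Q : 'S_(n.+2)).
Hypothesis hPQ : same_profile n k P Q.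

Lemma same_profile_sym : same_profile n k Q P.
Proof. by move=> i t hi ht; case: (hPQ hi ht) => -> ->. Qed.

Lemma same_profile_close x z : x <= n.+1 -> z <= n.+1 -> x != z ->
  x - z <= k -> z - x <= k ->
  imin n P x z = imin n Q x z /\ imax n P x z = imax n Q x z.
Proof.
move=> hx hz hxz h1 h2; case: (ltngtP x z) => lt_xz; last by rewrite lt_xz eqxx in hxz.
- by have := hPQ (i := z - x) (t := x); rewrite subnKC ?(ltnW lt_xz) //; apply; lia.
- rewrite (iminC P) (iminC Q) (imaxC P) (imaxC Q).
  by have := hPQ (i := x - z) (t := z); rewrite subnKC ?(ltnW lt_xz) //; apply; lia.
Qed.

Lemma same_profile_lower x z v : x <= n.+1 -> z <= n.+1 -> x != z ->
  x - z <= k -> z - x <= k -> v <= n.+1 -> between Q x z v ->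
  exists w, [/\ w <= n.+1, between P x z w & w <= v].
Proof.
move=> hx hz hxz h1 h2 hv hs; have [e _] := same_profile_close hx hz hxz h1 h2.
have := imin_le hv hs; rewrite -e.
by have [w [hw1 hw2 ->]] := imin_attained P x z hx; exists w.
Qed.

Lemma same_profile_upper x z v : x <= n.+1 -> z <= n.+1 -> x != z ->
  x - z <= k -> z - x <= k -> v <= n.+1 -> between Q x z v ->
  exists w, [/\ w <= n.+1, between P x z w & v <= w].
Proof.
move=> hx hz hxz h1 h2 hv hs; have [_ e] := same_profile_close hx hz hxz h1 h2.
have := imax_ge hv hs; rewrite -e.
by have [w [hw1 hw2 ->]] := imax_attained P x z; exists w.
Qed.

End SameProfile.

Record first_diff n (P Q : 'S_(n.+2)) j a b c : Prop := FirstDiff {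
  first_diff_pos : 1 <= j <= n;
  first_diff_a : a <= n.+1; first_diff_b : b <= n.+1; first_diff_c : c <= n.+1;
  first_diff_neq : a != b;
  first_diff_posPa : posn n P a = j; first_diff_posQb : posn n Q b = j;
  first_diff_posPc : posn n P c = j.-1; first_diff_posQc : posn n Q c = j.-1;
  first_diff_prefix : forall x, x <= n.+1 -> (posn n P x < j \/ posn n Q x < j) ->
    posn n P x = posn n Q x
}.

Lemma first_diff_sym n (P Q : 'S_(n.+2)) j a b c :
  first_diff P Q j a b c -> first_diff Q P j b a c.
Proof.
case=> hj ha hb hc hab pa qb pc qc pre; constructor => //; first by rewrite eq_sym.
by move=> x hx hxj; symmetry; apply: pre => //; tauto.
Qed.

Lemma exists_first_diff n (P Q : 'S_(n.+2)) : valid_perm n P -> valid_perm n Q -> P != Q ->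
  exists j, first_diff P Q j (entry P j) (entry Q j) (entry P j.-1).
Proof.
move=> vP vQ neqPQ.
have [j /andP [hj hd] hmin] : exists2 j, (j <= n.+1) && (entry P j != entry Q j) &
    forall i, i < j -> entry P i = entry Q i.
  have [i hi] : exists i, (i <= n.+1) && (entry P i != entry Q i).
    case: (boolP [exists x : 'I_n.+2, entry P x != entry Q x]).
    - by move/existsP => [x hx]; exists x; rewrite hx andbT -ltnS ltn_ord.
    - move=> /existsPn same; move: neqPQ; rewrite (_ : P = Q) ?eqxx //.
      apply/permP => x; apply: val_inj.
      by have := same x; rewrite negbK /entry inord_val => /eqP.
  have ex_i : exists i, (i <= n.+1) && (entry P i != entry Q i) by exists i.
  case: (ex_minnP ex_i) => j hj min_j; exists j => // i' lt_ij.
  apply/eqP; apply: contraT => hd'; have := min_j i'; rewrite hd' andbT; lia.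
have j0 : j != 0 by apply: contra hd => /eqP ->; rewrite !valid_entry0.
have jN : j != n.+1 by apply: contra hd => /eqP ->; rewrite !valid_entryN.
exists j; constructor; rewrite ?entry_le ?posn_entry //; try lia.
  by rewrite hmin ?posn_entry //; lia.
move=> x hx [] lt_xj; have := hmin _ lt_xj; rewrite entry_posn // => e.
- by rewrite {2}e posn_entry // posn_le.
- by rewrite -{1}e posn_entry // posn_le.
Qed.

Section FirstDiff.
Variables (n j a b c : nat) (P Q : 'S_(n.+2)).
Hypothesis fd : first_diff P Q j a b c.

Lemma first_diff_posQa : j < posn n Q a.
Proof.
case: fd => hj ha hb hc hab pa qb pc qc pre.
case: (ltngtP (posn n Q a) j) => h //.
- by have := pre a ha (or_intror h); lia.
- by move: hab; rewrite (posn_inj ha hb (etrans h (esym qb))) eqxx.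
Qed.

Lemma first_diff_neq0 : valid_perm n P -> a != 0.
Proof.
move=> vP; case: fd => hj _ _ _ _ pa _ _ _ _.
by apply/eqP => e; move: pa; rewrite e valid_posn0 //; lia.
Qed.

Lemma first_diff_neqN : valid_perm n P -> a != n.+1.
Proof.
move=> vP; case: fd => hj _ _ _ _ pa _ _ _ _.
by apply/eqP => e; move: pa; rewrite e valid_posnN //; lia.
Qed.

Lemma first_diff_posQa_le : valid_perm n P -> valid_perm n Q -> posn n Q a <= n.
Proof.
move=> vP vQ; apply: valid_posn_ltN => //; first exact: first_diff_a fd.
exact: first_diff_neqN.
Qed.

Variable k : nat.
Hypothesis hPQ : same_profile n k P Q.

Lemma first_diff_between : c != a -> c - a <= k -> a - c <= k -> minn c a <= b <= maxn c a.
Proof.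
move=> hca h1 h2.
have qa := first_diff_posQa.
case: (fd) => hj ha hb hc hab pa qb pc qc pre.
have sQ : between Q c a b by rewrite /between; lia.
have [w [hw1 hw2 hw3]] := same_profile_lower hPQ hc ha hca h1 h2 hb sQ.
have [w' [hw1' hw2' hw3']] := same_profile_upper hPQ hc ha hca h1 h2 hb sQ.
have e : posn n P a = (posn n P c).+1 by lia.
by case: (between_adjacent hc ha hw1 e hw2) => ?; case: (between_adjacent hc ha hw1' e hw2') => ?;
  subst; lia.
Qed.

End FirstDiff.

Lemma first_diff_far n k (P Q : 'S_(n.+2)) j a b c : same_profile n k P Q ->
  first_diff P Q j a b c -> k < maxn (c - a) (a - c).
Proof.
move=> hPQ fd; have fd' := first_diff_sym fd.
case: (fd) => hj ha hb hc hab pa qb pc qc pre.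
have hca : c != a by apply/eqP => e; move: pa; rewrite -e pc; lia.
have hcb : c != b by apply/eqP => e; move: qb; rewrite -e qc; lia.
rewrite ltnNge; apply/negP => hk.
have := first_diff_between fd hPQ hca ltac:(lia) ltac:(lia) => b_between.
have := first_diff_between fd' (same_profile_sym hPQ) hcb ltac:(lia) ltac:(lia).
by move: hab => /eqP; lia.
Qed.

Section FirstDiffAfterN.
Variables (n k j : nat) (P Q : 'S_(n.+2)).
Hypotheses (hn : 4 <= n) (hk : n - 3 <= k).
Hypotheses (hPQ : same_profile n k P Q) (vP : valid_perm n P) (vQ : valid_perm n Q).
Hypothesis fd : first_diff P Q j 1 2 n.

Let hQP := same_profile_sym hPQ.
Let h1N : 1 <= n.+1 := isT.
Let h2N : 2 <= n.+1. Proof. lia. Qed.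
Let h3N : 3 <= n.+1. Proof. lia. Qed.
Let pQ1 : j < posn n Q 1 := first_diff_posQa fd.
Let pP2 : j < posn n P 2 := first_diff_posQa (first_diff_sym fd).
Let pQ1_le : posn n Q 1 <= n := first_diff_posQa_le fd vP vQ.
Let hj := first_diff_pos fd.
Let pP1 := first_diff_posPa fd.
Let pQ2 := first_diff_posQb fd.
Let pPn := first_diff_posPc fd.
Let pQn := first_diff_posQc fd.
Let pre := first_diff_prefix fd.

Let j_ge2 : 2 <= j.
Proof.
have := posn_neq P (leq0n n.+1) (leqnSn n) ltac:(lia).
by rewrite valid_posn0 // pPn; lia.
Qed.

(* Otherwise [1] would lie between [n] and [Q(j+1)] in [P] but not in [Q]. *)
Lemma first_diff_after_N_posQ1 : posn n Q 1 = j.+1.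
Proof.
pose y := entry Q j.+1; have hy : y <= n.+1 := entry_le Q _.
have qy : posn n Q y = j.+1 by apply: posn_entry; lia.
have py : j <= posn n P y.
  by case: (leqP j (posn n P y)) => // h; have := pre hy (or_introl h); lia.
suff -> : 1 = y by [].
apply/eqP; apply: contraT => hy1.
have [y2 y0 yn yN] : [/\ y != 2, y != 0, y != n & y != n.+1].
  by split; apply/eqP => e; move: qy; rewrite e ?valid_posn0 ?valid_posnN //; lia.
have q1y := posn_neq Q h1N hy hy1.
have sP : between P n y 1 by rewrite /between; lia.
have [w [hw1 hw2 hw3]] :=
  same_profile_lower hQP (leqnSn n) hy ltac:(lia) ltac:(lia) ltac:(lia) h1N sP.
have : w = 0 \/ w = 1 by lia.
by case=> ?; subst w; move: hw2; rewrite /between ?valid_posn0 //; lia.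
Qed.

Let pQ1_next := first_diff_after_N_posQ1.

(* [Q] places [2, 1] consecutively, which caps what follows [1] in [P]. *)
Lemma first_diff_after_N_posP2 : posn n P 2 = j.+1.
Proof.
pose z := entry P j.+1; have hz : z <= n.+1 := entry_le P _.
have pz : posn n P z = j.+1 by apply: posn_entry; lia.
suff <- : z = 2 by [].
have sP : between P 1 2 z by rewrite /between; lia.
have [w [hw1 hw2 hw3]] := same_profile_upper hQP h1N h2N isT ltac:(lia) ltac:(lia) hz sP.
have e : posn n Q 1 = (posn n Q 2).+1 by lia.
rewrite betweenC in hw2.
have [z0 z1] : z != 0 /\ z != 1.
  by split; apply/eqP => e'; move: pz; rewrite e' ?valid_posn0 //; lia.
by case: (between_adjacent h2N h1N hw1 e hw2) => ?; subst w; lia.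
Qed.

Let pP2_next := first_diff_after_N_posP2.

(* Wherever [3] sits, [1] separates it from [2] in exactly one of [P], [Q]. *)
Lemma first_diff_after_N : False.
Proof.
have p30 := posn_neq P h3N (leq0n _) isT.
have p31 := posn_neq P h3N h1N isT; have p32 := posn_neq P h3N h2N isT.
have q31 := posn_neq Q h3N h1N isT; have q32 := posn_neq Q h3N h2N isT.
have p3n := posn_neq P h3N (leqnSn n) ltac:(lia).
have q3n := posn_neq Q h3N (leqnSn n) ltac:(lia).
have P0 := valid_posn0 vP; have Q0 := valid_posn0 vQ.
case: (ltnP (posn n P 3) j) => hp3.
- have e3 := pre h3N (or_introl hp3).
  have sP : between P 3 2 1 by rewrite /between; lia.
  have [w [hw1 hw2 hw3]] := same_profile_lower hQP h3N h2N isT ltac:(lia) ltac:(lia) h1N sP.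
  have : w = 0 \/ w = 1 by lia.
  by case=> ?; subst w; move: hw2; rewrite /between; lia.
- have hq3 : j <= posn n Q 3.
    by case: (leqP j (posn n Q 3)) => // h; have := pre h3N (or_intror h); lia.
  have sQ : between Q 2 3 1 by rewrite /between; lia.
  have [w [hw1 hw2 hw3]] := same_profile_lower hPQ h2N h3N isT ltac:(lia) ltac:(lia) h1N sQ.
  have : w = 0 \/ w = 1 by lia.
  by case=> ?; subst w; move: hw2; rewrite /between; lia.
Qed.

End FirstDiffAfterN.

Section FirstDiffAfter1.
Variables (n k j : nat) (P Q : 'S_(n.+2)).
Hypotheses (hn : 4 <= n) (hk : n - 3 <= k).
Hypotheses (hPQ : same_profile n k P Q) (vP : valid_perm n P) (vQ : valid_perm n Q).
Hypothesis fd : first_diff P Q j n.-1 n 1.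

Let hQP := same_profile_sym hPQ.
Let h1N : 1 <= n.+1 := isT.
Let h2N : 2 <= n.+1. Proof. lia. Qed.
Let hN : n <= n.+1 := leqnSn n.
Let hN1 : n.-1 <= n.+1. Proof. lia. Qed.
Let pQa : j < posn n Q n.-1 := first_diff_posQa fd.
Let pPb : j < posn n P n := first_diff_posQa (first_diff_sym fd).
Let pPb_le : posn n P n <= n := first_diff_posQa_le (first_diff_sym fd) vQ vP.
Let hj := first_diff_pos fd.
Let pPa := first_diff_posPa fd.
Let pQb := first_diff_posQb fd.
Let pP1 := first_diff_posPc fd.
Let pQ1 := first_diff_posQc fd.
Let pre := first_diff_prefix fd.

(* Otherwise [n] would lie between [1] and [P(j+1)] in [Q] but not in [P]. *)
Lemma first_diff_after_1_posPn : posn n P n = j.+1.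
Proof.
pose y := entry P j.+1; have hy : y <= n.+1 := entry_le P _.
have py : posn n P y = j.+1 by apply: posn_entry; lia.
have qy : j <= posn n Q y.
  by case: (leqP j (posn n Q y)) => // h; have := pre hy (or_intror h); lia.
suff yn : y = n by move: py; rewrite yn.
apply/eqP; apply: contraT => hyn.
have [ya y0 y1 yN] : [/\ y != n.-1, y != 0, y != 1 & y != n.+1].
  by split; apply/eqP => e; move: py; rewrite e ?valid_posn0 ?valid_posnN //; lia.
have pny := posn_neq P hy hN hyn.
have sQ : between Q 1 y n by rewrite /between; lia.
have [w [hw1 hw2 hw3]] :=
  same_profile_upper hPQ h1N hy ltac:(lia) ltac:(lia) ltac:(lia) hN sQ.
have : w = n \/ w = n.+1 by lia.
by case=> ?; subst w; move: hw2; rewrite /between ?valid_posnN //; lia.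
Qed.

Let pPn_next := first_diff_after_1_posPn.

(* [P] places [n - 1, n] consecutively, which bounds what follows [n] in [Q]. *)
Lemma first_diff_after_1_posQa : posn n Q n.-1 = j.+1.
Proof.
pose z := entry Q j.+1; have hz : z <= n.+1 := entry_le Q _.
have qz : posn n Q z = j.+1 by apply: posn_entry; lia.
suff <- : z = n.-1 by [].
have sQ : between Q n.-1 n z by rewrite /between; lia.
have [w [hw1 hw2 hw3]] := same_profile_lower hPQ hN1 hN ltac:(lia) ltac:(lia) ltac:(lia) hz sQ.
have e : posn n P n = (posn n P n.-1).+1 by lia.
have [zn zN] : z != n /\ z != n.+1.
  by split; apply/eqP => e'; move: qz; rewrite e' ?valid_posnN //; lia.
by case: (between_adjacent hN1 hN hw1 e hw2) => ?; subst w; lia.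
Qed.

Let pQa_next := first_diff_after_1_posQa.

(* Wherever [2] sits, [n] separates it from [n - 1] in exactly one of [P], [Q]. *)
Lemma first_diff_after_1 : False.
Proof.
have p21 := posn_neq P h2N h1N isT; have q21 := posn_neq Q h2N h1N isT.
have p2a := posn_neq P h2N hN1 ltac:(lia); have q2a := posn_neq Q h2N hN1 ltac:(lia).
have p2n := posn_neq P h2N hN ltac:(lia); have q2n := posn_neq Q h2N hN ltac:(lia).
have q2N := valid_posn_ltN vQ h2N ltac:(lia).
case: (ltnP (posn n P 2) j) => hp2.
- have e2 := pre h2N (or_introl hp2).
  have sQ : between Q 2 n.-1 n by rewrite /between; lia.
  have [w [hw1 hw2 hw3]] := same_profile_upper hPQ h2N hN1 ltac:(lia) ltac:(lia) ltac:(lia) hN sQ.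
  have : w = n \/ w = n.+1 by lia.
  by case=> ?; subst w; move: hw2; rewrite /between ?valid_posnN //; lia.
- have hq2 : j <= posn n Q 2.
    by case: (leqP j (posn n Q 2)) => // h; have := pre h2N (or_intror h); lia.
  have sP : between P n.-1 2 n by rewrite /between; lia.
  have [w [hw1 hw2 hw3]] := same_profile_upper hQP hN1 h2N ltac:(lia) ltac:(lia) ltac:(lia) hN sP.
  have : w = n \/ w = n.+1 by lia.
  by case=> ?; subst w; move: hw2; rewrite /between ?valid_posnN //; lia.
Qed.

End FirstDiffAfter1.

Lemma first_diff_after_0_pos n (P Q : 'S_(n.+2)) j a b :
  valid_perm n P -> first_diff P Q j a b 0 -> j = 1.
Proof.
move=> vP fd; have := first_diff_posPc fd; rewrite valid_posn0 // => /esym.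
by have := first_diff_pos fd; lia.
Qed.

Section FirstDiffAfter0.
Variables (n k j : nat) (P Q : 'S_(n.+2)).
Hypotheses (hn : 5 <= n) (hk : n - 3 <= k).
Hypotheses (hPQ : same_profile n k P Q) (vP : valid_perm n P) (vQ : valid_perm n Q).

Let hQP := same_profile_sym hPQ.
Let P0 := valid_posn0 vP.
Let Q0 := valid_posn0 vQ.
Let PN := valid_posnN vP.
Let QN := valid_posnN vQ.
Let h0N : 0 <= n.+1 := leq0n _.
Let h2N : 2 <= n.+1. Proof. lia. Qed.
Let hN : n <= n.+1 := leqnSn n.
Let hN1 : n.-1 <= n.+1. Proof. lia. Qed.
Let hN2 : n - 2 <= n.+1. Proof. lia. Qed.
Let hNN : n.+1 <= n.+1 := leqnn _.

(* [n] follows [0] in [P], so it must lie between [0] and [2] in [Q], and then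
   between [b] and [2]; but in [P] nothing large lies between [b] and [2]. *)
Lemma first_diff_after_0_N b : first_diff P Q j n b 0 -> n - 2 <= b <= n - 1 -> False.
Proof.
move=> fd hb; have j1 := first_diff_after_0_pos vP fd.
have pPa := first_diff_posPa fd; have pQb := first_diff_posQb fd.
have pPb := first_diff_posQa (first_diff_sym fd); have pQa := first_diff_posQa fd.
have pPb_le := first_diff_posQa_le (first_diff_sym fd) vQ vP.
rewrite j1 in pPa pQb pPb pQa.
have hbN := first_diff_b fd.
have p2le := posn_le P 2; have q2le := posn_le Q 2.
have p20 := posn_neq P h2N h0N isT; have p2n := posn_neq P h2N hN ltac:(lia).
have p2N := posn_neq P h2N hNN ltac:(lia); have q20 := posn_neq Q h2N h0N isT.
have q2N := posn_neq Q h2N hNN ltac:(lia); have qn0 := posn_neq Q hN h0N ltac:(lia).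
have sP : between P 0 2 n by rewrite /between; lia.
have [w [hw1 hw2 hw3]] := same_profile_upper hQP h0N h2N isT ltac:(lia) ltac:(lia) hN sP.
have qn2 : posn n Q n <= posn n Q 2.
  have : w = n \/ w = n.+1 by lia.
  by case=> ?; subst w; move: hw2; rewrite /between; lia.
have sQ : between Q b 2 n by rewrite /between; lia.
have [v [hv1 hv2 hv3]] := same_profile_upper hPQ hbN h2N ltac:(lia) ltac:(lia) ltac:(lia) hN sQ.
have : v = n \/ v = n.+1 by lia.
by case=> ?; subst v; move: hv2; rewrite /between; lia.
Qed.

Section ConfigurationPred.
Hypothesis fd : first_diff P Q j n.-1 (n - 2) 0.
Let j1 : j = 1 := first_diff_after_0_pos vP fd.
Let pPa : posn n P n.-1 = 1. Proof. by rewrite (first_diff_posPa fd) j1. Qed.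
Let pQb : posn n Q (n - 2) = 1. Proof. by rewrite (first_diff_posQb fd) j1. Qed.
Let pPb : 1 < posn n P (n - 2).
Proof. by have := first_diff_posQa (first_diff_sym fd); rewrite j1. Qed.
Let pQa : 1 < posn n Q n.-1. Proof. by have := first_diff_posQa fd; rewrite j1. Qed.

(* [n - 1] lies between [0] and [w] in [P] but not in [Q]. *)
Lemma first_diff_after_0_Q2_small w : posn n Q w = 2 -> 1 <= w <= n - 3 -> False.
Proof.
move=> qw hw13; have hw : w <= n.+1 by lia.
have pw0 := valid_posn_gt0 vP hw ltac:(lia).
have sP : between P 0 w n.-1 by rewrite /between; lia.
have [v [hv1 hv2 hv3]] := same_profile_upper hQP h0N hw ltac:(lia) ltac:(lia) ltac:(lia) hN1 sP.
have : posn n Q v = posn n Q 0 \/ posn n Q v = posn n Q (n - 2) \/ posn n Q v = posn n Q w.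
  by move: hv2; rewrite /between; lia.
by case=> [/(posn_inj hv1 h0N)|[/(posn_inj hv1 hN2)|/(posn_inj hv1 hw)]] ?; subst v; lia.
Qed.

(* [n] lies between [0] and [2] in [Q], hence in [P], hence between [n - 1]
   and [2] in [P], which is impossible in [Q]. *)
Lemma first_diff_after_0_Q2_N : posn n Q n = 2 -> False.
Proof.
move=> qw.
have pos_ge3 x : x <= n.+1 -> x != 0 -> x != n - 2 -> x != n -> 3 <= posn n Q x.
  move=> hx x0 xb xn.
  have := posn_neq Q hx h0N x0; have := posn_neq Q hx hN2 xb; have := posn_neq Q hx hN xn.
  by rewrite Q0 pQb qw; lia.
have q23 := pos_ge3 2 h2N isT ltac:(lia) ltac:(lia).
have qa3 := pos_ge3 n.-1 hN1 ltac:(lia) ltac:(lia) ltac:(lia).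
have p2le := valid_posn_ltN vP h2N ltac:(lia).
have q2le := valid_posn_ltN vQ h2N ltac:(lia).
have qale := valid_posn_ltN vQ hN1 ltac:(lia).
have pn0 := valid_posn_gt0 vP hN ltac:(lia).
have sQ : between Q 0 2 n by rewrite /between; lia.
have [u [hu1 hu2 hu3]] := same_profile_upper hPQ h0N h2N isT ltac:(lia) ltac:(lia) hN sQ.
have hpn : posn n P n <= posn n P 2.
  have : u = n \/ u = n.+1 by lia.
  by case=> ?; subst u; move: hu2; rewrite /between; lia.
have sP : between P n.-1 2 n by rewrite /between; lia.
have [v [hv1 hv2 hv3]] := same_profile_upper hQP hN1 h2N ltac:(lia) ltac:(lia) ltac:(lia) hN sP.
have : v = n \/ v = n.+1 by lia.
by case=> ?; subst v; move: hv2; rewrite /between; lia.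
Qed.

Section Q2Pred.
Hypothesis qa2 : posn n Q n.-1 = 2.

(* [Q] places [n - 2, n - 1] consecutively, so [P(2)] is one of them. *)
Lemma first_diff_after_0_posP2 : posn n P (n - 2) = 2.
Proof.
pose z := entry P 2; have hz : z <= n.+1 := entry_le P _.
have pz : posn n P z = 2 by apply: posn_entry; lia.
suff <- : z = n - 2 by [].
have sP : between P n.-1 (n - 2) z by rewrite /between; lia.
have e : posn n Q n.-1 = (posn n Q (n - 2)).+1 by lia.
have [v [hv1 hv2 hv3]] := same_profile_lower hQP hN1 hN2 ltac:(lia) ltac:(lia) ltac:(lia) hz sP.
have [v' [hv1' hv2' hv3']] := same_profile_upper hQP hN1 hN2 ltac:(lia) ltac:(lia) ltac:(lia) hz sP.
rewrite betweenC in hv2; rewrite betweenC in hv2'.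
have : z != n.-1 by apply/eqP => e'; move: pz; rewrite e'; lia.
by case: (between_adjacent hN2 hN1 hv1 e hv2) => ?;
  case: (between_adjacent hN2 hN1 hv1' e hv2') => ?; subst v v'; lia.
Qed.

Let pP2_next := first_diff_after_0_posP2.

Let posP_ge3 x : x <= n.+1 -> x != 0 -> x != n.-1 -> x != n - 2 -> 3 <= posn n P x.
Proof.
move=> hx x0 xa xb.
have := posn_neq P hx h0N x0; have := posn_neq P hx hN1 xa; have := posn_neq P hx hN2 xb.
by rewrite P0 pPa pP2_next; lia.
Qed.

(* Otherwise [n - 2] lies between [n - 1] and [n] in [P] but not in [Q]. *)
Lemma first_diff_after_0_posQn : posn n Q n != 3.
Proof.
apply/eqP => qn.
have pn3 := posP_ge3 hN ltac:(lia) ltac:(lia) ltac:(lia).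
have sP : between P n.-1 n (n - 2) by rewrite /between; lia.
have [u [hu1 hu2 hu3]] := same_profile_lower hQP hN1 hN ltac:(lia) ltac:(lia) ltac:(lia) hN2 sP.
have e : posn n Q n = (posn n Q n.-1).+1 by lia.
by case: (between_adjacent hN1 hN hu1 e hu2) => ?; subst u; lia.
Qed.

(* With [y = Q(3)] small: [n] cannot precede [y] in [P] (it would lie between
   [0] and [y]), yet [n - 1] lies between [n - 2] and [y] in [Q] only. *)
Lemma first_diff_after_0_Q2_pred : False.
Proof.
pose y := entry Q 3; have hy : y <= n.+1 := entry_le Q _.
have qy : posn n Q y = 3 by apply: posn_entry; lia.
have [yb ya y0 yN] : [/\ y != n - 2, y != n.-1, y != 0 & y != n.+1].
  by split; apply/eqP => e; move: qy; rewrite e ?Q0 ?QN //; lia.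
have yn : y != n.
  by apply/eqP => e; move: qy first_diff_after_0_posQn; rewrite e => ->.
have pyle := valid_posn_ltN vP hy yN.
have py3 := posP_ge3 hy y0 ya yb.
have pn3 := posP_ge3 hN ltac:(lia) ltac:(lia) ltac:(lia).
have hpy : posn n P y < posn n P n.
  case: (ltnP (posn n P y) (posn n P n)) => // hle.
  have sP : between P 0 y n by rewrite /between; lia.
  have [u [hu1 hu2 hu3]] := same_profile_upper hQP h0N hy ltac:(lia) ltac:(lia) ltac:(lia) hN sP.
  have : posn n Q u = posn n Q 0 \/ posn n Q u = posn n Q (n - 2) \/
         posn n Q u = posn n Q n.-1 \/ posn n Q u = posn n Q y.
    by move: hu2; rewrite /between; lia.
  by case=> [/(posn_inj hu1 h0N)|[/(posn_inj hu1 hN2)|[/(posn_inj hu1 hN1)|/(posn_inj hu1 hy)]]] ?;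
    subst u; lia.
have sQ : between Q (n - 2) y n.-1 by rewrite /between; lia.
have [u [hu1 hu2 hu3]] := same_profile_upper hPQ hN2 hy ltac:(lia) ltac:(lia) ltac:(lia) hN1 sQ.
have : u = n.-1 \/ u = n \/ u = n.+1 by lia.
by case=> [|[|]] ?; subst u; move: hu2; rewrite /between; lia.
Qed.

End Q2Pred.

Lemma first_diff_after_0_pred : False.
Proof.
pose w := entry Q 2; have hw : w <= n.+1 := entry_le Q _.
have qw : posn n Q w = 2 by apply: posn_entry; lia.
have [wb w0 wN] : [/\ w != n - 2, w != 0 & w != n.+1].
  by split; apply/eqP => e; move: qw; rewrite e ?Q0 ?QN //; lia.
case: (leqP w (n - 3)) => hw3; first exact: (first_diff_after_0_Q2_small qw ltac:(lia)).
have : w = n.-1 \/ w = n by lia.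
case=> ew; rewrite ew in qw; first exact: first_diff_after_0_Q2_pred.
exact: first_diff_after_0_Q2_N.
Qed.

End ConfigurationPred.

End FirstDiffAfter0.

Lemma reconstructing_large n k : 5 <= n -> n - 3 <= k -> reconstructing n k.
Proof.
move=> hn hk P Q vP vQ hPQ; apply/eqP; apply: contraT => neqPQ; exfalso.
have [j] := exists_first_diff vP vQ neqPQ.
move: (entry P j) (entry Q j) (entry P j.-1) => a b c fd.
have fd' := first_diff_sym fd; have hQP := same_profile_sym hPQ.
have far_a := first_diff_far hPQ fd; have far_b := first_diff_far hQP fd'.
have a0 := first_diff_neq0 fd vP; have aN := first_diff_neqN fd vP.
have b0 := first_diff_neq0 fd' vQ; have bN := first_diff_neqN fd' vQ.
have cN : c != n.+1.
  apply/eqP => e; have := first_diff_posPc fd; rewrite e valid_posnN //.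
  by have := first_diff_pos fd; lia.
have ha := first_diff_a fd; have hb := first_diff_b fd; have hab := first_diff_neq fd.
have hc := first_diff_c fd.
have : c = 0 \/ c = 1 \/ c = n by lia.
case=> [|[|]] ec; subst c.
- have [ea|[eb|[[ea eb]|[ea eb]]]] : a = n \/ b = n \/
    (a = n.-1 /\ b = n - 2) \/ (a = n - 2 /\ b = n.-1) by lia.
  + by subst a; apply: (first_diff_after_0_N hn hk hPQ vP vQ fd); lia.
  + by subst b; apply: (first_diff_after_0_N hn hk hQP vQ vP fd'); lia.
  + by subst a b; apply: (first_diff_after_0_pred hn hk hPQ vP vQ fd).
  + by subst a b; apply: (first_diff_after_0_pred hn hk hQP vQ vP fd').
- have [[ea eb]|[ea eb]] : (a = n.-1 /\ b = n) \/ (a = n /\ b = n.-1) by lia.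
  + by subst a b; apply: (first_diff_after_1 (ltnW hn) hk hPQ vP vQ fd).
  + by subst a b; apply: (first_diff_after_1 (ltnW hn) hk hQP vQ vP fd').
- have [[ea eb]|[ea eb]] : (a = 1 /\ b = 2) \/ (a = 2 /\ b = 1) by lia.
  + by subst a b; apply: (first_diff_after_N (ltnW hn) hk hPQ vP vQ fd).
  + by subst a b; apply: (first_diff_after_N (ltnW hn) hk hQP vQ vP fd').
Qed.

Lemma foldr_minn_le d (l : seq nat) x : x \in l -> foldr minn d l <= x.
Proof.
elim: l => // a l IH; rewrite inE /= => /orP [/eqP ->|h]; first exact: geq_minl.
by rewrite geq_min IH ?orbT.
Qed.

Lemma foldr_minn_mem d (l : seq nat) : foldr minn d l = d \/ foldr minn d l \in l.
Proof.
elim: l => [|a l IH] /=; first by left.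
case: (leqP a (foldr minn d l)) => h; first by right; rewrite inE eqxx.
by case: IH => [->|IH]; [left|right; rewrite inE IH orbT].
Qed.

Lemma foldr_maxn_ge (l : seq nat) x : x \in l -> x <= foldr maxn 0 l.
Proof.
elim: l => // a l IH; rewrite inE /= => /orP [/eqP ->|h]; first exact: leq_maxl.
by rewrite leq_max IH ?orbT.
Qed.

Lemma foldr_maxn_mem (l : seq nat) : foldr maxn 0 l = 0 \/ foldr maxn 0 l \in l.
Proof.
elim: l => [|a l IH] /=; first by left.
case: (leqP a (foldr maxn 0 l)) => h; last by right; rewrite inE eqxx.
by case: IH => [->|IH]; [left|right; rewrite inE IH orbT].
Qed.

Lemma uniq_map_inj_in (T U : eqType) (f : T -> U) (s : seq T) :
  uniq (map f s) -> {in s &, injective f}.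
Proof.
elim: s => // a s IH /= /andP [fa_notin us] x y; rewrite !inE.
move=> /orP [/eqP ->|xs] /orP [/eqP ->|ys] e //.
- by move: fa_notin; rewrite e map_f.
- by move: fa_notin; rewrite -e map_f.
- exact: IH.
Qed.

(* Executable versions of [imin] and [imax] on the list of entries of a
   permutation of [[0, n + 1]]. *)
Definition seq_segment (s : seq nat) t u : seq nat :=
  let lo := minn (index t s) (index u s) in let hi := maxn (index t s) (index u s) in
  [seq nth 0 s p | p <- iota lo (hi - lo).+1].

Definition profile1 n (s : seq nat) : seq (nat * nat) :=
  [seq (foldr minn n.+1 (seq_segment s t t.+1), foldr maxn 0 (seq_segment s t t.+1))
  | t <- iota 0 n.+1].

Definition profile1_injective n : bool :=
  uniq [seq profile1 n (0 :: rcons l n.+1) | l <- permutations (iota 1 n)].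

Lemma profile1_injective_small n : 1 <= n <= 4 -> profile1_injective n.
Proof. by case/andP; case: n => [|[|[|[|[|n]]]]] //= _ _; vm_compute. Qed.

Section Entries.
Variables (n : nat) (P : 'S_(n.+2)).

Definition entries : seq nat := [seq entry P i | i <- iota 0 n.+2].

Lemma nth_entries p : p < n.+2 -> nth 0 entries p = entry P p.
Proof. by move=> hp; rewrite (nth_map 0) ?size_iota // nth_iota. Qed.

Lemma index_entries x : x <= n.+1 -> index x entries = posn n P x.
Proof.
move=> hx; rewrite -{1}(entry_posn P hx) -nth_entries ?ltnS ?posn_le // index_uniq //.
  by rewrite size_map size_iota ltnS posn_le.
rewrite map_inj_in_uniq ?iota_uniq // => i j; rewrite !mem_iota => hi hj.
by apply: entry_inj; lia.
Qed.

Lemma mem_seq_segment t u v : t <= n.+1 -> u <= n.+1 ->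
  v \in seq_segment entries t u -> v <= n.+1 /\ between P t u v.
Proof.
move=> ht hu /mapP [p]; rewrite !index_entries // mem_iota => hp ->.
have hpN : p < n.+2 by have := posn_le P t; have := posn_le P u; lia.
rewrite nth_entries // entry_le /between posn_entry //; lia.
Qed.

Lemma between_mem_seq_segment t u v : t <= n.+1 -> u <= n.+1 -> v <= n.+1 ->
  between P t u v -> v \in seq_segment entries t u.
Proof.
move=> ht hu hv hs; apply/mapP; exists (posn n P v).
  by rewrite !index_entries // mem_iota; move: hs; rewrite /between; lia.
by rewrite nth_entries ?ltnS ?posn_le // entry_posn.
Qed.

Lemma imin_seq t u : t <= n.+1 -> u <= n.+1 ->
  imin n P t u = foldr minn n.+1 (seq_segment entries t u).
Proof.
move=> ht hu; apply/eqP; rewrite eqn_leq; apply/andP; split.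
- have [->|/(mem_seq_segment ht hu) [hv hs]] := foldr_minn_mem n.+1 (seq_segment entries t u).
    by have := imin_le ht (between_l P t u); lia.
  exact: imin_le.
- have [v [hv hs ->]] := imin_attained P t u ht.
  exact/foldr_minn_le/between_mem_seq_segment.
Qed.

Lemma imax_seq t u : t <= n.+1 -> u <= n.+1 ->
  imax n P t u = foldr maxn 0 (seq_segment entries t u).
Proof.
move=> ht hu; apply/eqP; rewrite eqn_leq; apply/andP; split.
- have [v [hv hs ->]] := imax_attained P t u.
  exact/foldr_maxn_ge/between_mem_seq_segment.
- have [->|/(mem_seq_segment ht hu) [hv hs]] := foldr_maxn_mem (seq_segment entries t u) => //.
  exact: imax_ge.
Qed.

Hypothesis vP : valid_perm n P.

Definition inner_entries : seq nat := [seq entry P i | i <- iota 1 n].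

Lemma entries_inner : entries = 0 :: rcons inner_entries n.+1.
Proof.
rewrite /entries (_ : iota 0 n.+2 = 0 :: rcons (iota 1 n) n.+1).
  by rewrite /= map_rcons valid_entry0 // valid_entryN.
by rewrite -cats1 -(iotaD 1 n 1) addn1.
Qed.

Lemma inner_entries_perm : inner_entries \in permutations (iota 1 n).
Proof.
rewrite mem_permutations.
have u : uniq inner_entries.
  rewrite map_inj_in_uniq ?iota_uniq // => i j; rewrite !mem_iota => hi hj.
  by apply: entry_inj; lia.
have sub : {subset inner_entries <= iota 1 n}.
  move=> x /mapP [i]; rewrite mem_iota => hi ->; rewrite mem_iota.
  have h0 : entry P i != 0 by apply/eqP; rewrite -(valid_entry0 vP) => /entry_inj; lia.
  have hN : entry P i != n.+1 by apply/eqP; rewrite -(valid_entryN vP) => /entry_inj; lia.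
  by have := entry_le P i; lia.
have [_ e] := uniq_min_size u sub ltac:(by rewrite size_map).
by apply: uniq_perm => //; exact: iota_uniq.
Qed.

End Entries.

Lemma reconstructing_small n : 1 <= n <= 4 -> reconstructing n 1.
Proof.
move=> hn P Q vP vQ hPQ.
have e : profile1 n (entries P) = profile1 n (entries Q).
  apply/eq_in_map => t; rewrite mem_iota => ht.
  have [e1 e2] := hPQ 1 t isT ltac:(lia); rewrite addn1 in e1 e2.
  by rewrite -!imin_seq -?imax_seq ?e1 ?e2 //; lia.
have ePQ : entries P = entries Q.
  rewrite !entries_inner //; congr (_ :: rcons _ _).
  apply: (uniq_map_inj_in (profile1_injective_small hn)); rewrite ?inner_entries_perm //.
  by rewrite -!entries_inner.
apply/permP => x; apply: val_inj.
by have := nth_entries P (ltn_ord x); rewrite ePQ nth_entries // /entry inord_val.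
Qed.

Section EqExtremum.
Variables (n t u : nat) (P Q : 'S_(n.+2)).
Hypothesis ht : t <= n.+1.

Lemma eq_imin :
  (forall v, v <= n.+1 -> between Q t u v -> exists w, [/\ w <= n.+1, between P t u w & w <= v]) ->
  (forall v, v <= n.+1 -> between P t u v -> exists w, [/\ w <= n.+1, between Q t u w & w <= v]) ->
  imin n P t u = imin n Q t u.
Proof.
move=> hQP hPQ.
have [v [hv1 hv2 e]] := imin_attained Q t u ht.
have [v' [hv1' hv2' e']] := imin_attained P t u ht.
have [w [hw1 hw2 hw3]] := hQP v hv1 hv2; have [w' [hw1' hw2' hw3']] := hPQ v' hv1' hv2'.
by have := imin_le hw1 hw2; have := imin_le hw1' hw2'; lia.
Qed.

Lemma eq_imax :
  (forall v, v <= n.+1 -> between Q t u v -> exists w, [/\ w <= n.+1, between P t u w & v <= w]) ->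
  (forall v, v <= n.+1 -> between P t u v -> exists w, [/\ w <= n.+1, between Q t u w & v <= w]) ->
  imax n P t u = imax n Q t u.
Proof.
move=> hQP hPQ.
have [v [hv1 hv2 e]] := imax_attained Q t u.
have [v' [hv1' hv2' e']] := imax_attained P t u.
have [w [hw1 hw2 hw3]] := hQP v hv1 hv2; have [w' [hw1' hw2' hw3']] := hPQ v' hv1' hv2'.
by have := imax_ge hw1 hw2; have := imax_ge hw1' hw2'; lia.
Qed.

End EqExtremum.

Section SwapBetween.
Variables (n y : nat) (X Y : 'S_(n.+2)).
Hypotheses (hn : 4 <= n) (hy : 3 <= y <= n.-1) (vX : valid_perm n X).
Hypotheses (x1 : posn n X 1 = n - 3) (xn : posn n X n = n - 2).
Hypothesis x2y : (posn n X 2 = n.-1 /\ posn n X y = n) \/ (posn n X 2 = n /\ posn n X y = n.-1).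
Hypotheses (y2 : posn n Y 2 = posn n X y) (yy : posn n Y y = posn n X 2).
Hypothesis hxy : forall z, z <= n.+1 -> z != 2 -> z != y -> posn n Y z = posn n X z.

Lemma swap_posn_cases z : z <= n.+1 ->
  z = 2 \/ z = y \/ [/\ posn n Y z = posn n X z, posn n X z != n.-1 & posn n X z != n].
Proof using hy x2y hxy.
move=> hz; case: (eqVneq z 2) => [|z2]; first by left.
case: (eqVneq z y) => [|zy]; first by right; left.
right; right; split; first exact: hxy.
all: have := posn_neq X hz (_ : 2 <= n.+1) z2; have := posn_neq X hz (_ : y <= n.+1) zy.
all: by case: x2y => [[-> ->]|[-> ->]]; clear -hy; lia.
Qed.

Lemma between_swap t u v : t <= n.+1 -> u <= n.+1 -> v <= n.+1 ->
  ~ (t = y /\ u = n) -> ~ (t = n /\ u = y) -> ~ (t = y /\ u = n.+1) -> ~ (t = n.+1 /\ u = y) ->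
  ~ (t = 2 /\ u = n.+1) -> ~ (t = n.+1 /\ u = 2) ->
  between Y t u v ->
  between X t u v \/ (v = y /\ between X t u 2 /\ between X t u n) \/
  (v = 2 /\ between X t u 1 /\ between X t u y).
Proof.
move=> ht hu hv n1 n2 n3 n4 n5 n6.
have hyN : y <= n.+1 by lia.
have cl := swap_posn_cases.
have pn2 z : z <= n.+1 -> z != n -> posn n X z != n - 2.
  by move=> hz zn; rewrite -xn; apply: posn_neq hz (leqnSn n) zn.
have le_sub2 p : p <= n -> p != n.-1 -> p != n -> p <= n - 2 by lia.
have le_sub3 p : p <= n - 2 -> p != n - 2 -> p <= n - 3 by lia.
rewrite /between.
case: x2y => [[hx2 hxy2]|[hx2 hxy2]]; rewrite ?y2 ?yy hx2 hxy2.
all: case: (cl t ht) => [et|[et|[et1 et2 et3]]];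
  case: (cl u hu) => [eu|[eu|[eu1 eu2 eu3]]]; (try subst t); (try subst u).
all: try (have tl : posn n X t <= n - 2 by
  (apply: le_sub2 => //; apply: valid_posn_ltN => //; apply/eqP => e; subst t; lia)).
all: try (have ul : posn n X u <= n - 2 by
  (apply: le_sub2 => //; apply: valid_posn_ltN => //; apply/eqP => e; subst u; lia)).
all: try (have tl3 : posn n X t <= n - 3 by
  (apply: le_sub3 => //; apply: pn2 => //; apply/eqP => e; subst t; lia)).
all: try (have ul3 : posn n X u <= n - 3 by
  (apply: le_sub3 => //; apply: pn2 => //; apply/eqP => e; subst u; lia)).
all: clear n1 n2 n3 n4 n5 n6 pn2 x2y le_sub2 le_sub3.
all: case: (cl v hv) => [ev|[ev|[ev1 ev2 ev3]]]; (try subst v);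
  rewrite ?y2 ?yy ?et1 ?eu1 ?ev1 ?x1 ?xn ?hx2 ?hxy2; clear cl hxy y2 yy; lia.
Qed.

End SwapBetween.

Section Swap.
Variables (n y : nat) (X Y : 'S_(n.+2)).
Hypotheses (hn : 4 <= n) (hy : 3 <= y <= n.-1).
Hypotheses (vX : valid_perm n X) (vY : valid_perm n Y).
Hypotheses (x1 : posn n X 1 = n - 3) (xn : posn n X n = n - 2).
Hypotheses (x2 : posn n X 2 = n.-1) (xy : posn n X y = n).
Hypotheses (y2 : posn n Y 2 = n) (yy : posn n Y y = n.-1).
Hypothesis hxy : forall z, z <= n.+1 -> z != 2 -> z != y -> posn n Y z = posn n X z.

Let hyx z : z <= n.+1 -> z != 2 -> z != y -> posn n X z = posn n Y z.
Proof. by move=> hz z2 zy; rewrite hxy. Qed.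
Let y1 : posn n Y 1 = n - 3. Proof. by rewrite hxy //; lia. Qed.
Let yn : posn n Y n = n - 2. Proof. by rewrite hxy //; lia. Qed.

Let sXY := between_swap hn hy vX x1 xn (or_introl (conj x2 xy))
  (etrans y2 (esym xy)) (etrans yy (esym x2)) hxy.
Let sYX := between_swap hn hy vY y1 yn (or_intror (conj y2 yy))
  (etrans x2 (esym yy)) (etrans xy (esym y2)) hyx.

Lemma swap_same_extrema k t u : t < u -> u <= n.+1 -> u - t <= k -> k < n - y ->
  imin n X t u = imin n Y t u /\ imax n X t u = imax n Y t u.
Proof.
move=> htu hu hk hky; have ht : t <= n.+1 by lia.
have n1 : ~ (t = y /\ u = n) by lia. have n2 : ~ (t = n /\ u = y) by lia.
have n3 : ~ (t = y /\ u = n.+1) by lia. have n4 : ~ (t = n.+1 /\ u = y) by lia.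
have n5 : ~ (t = 2 /\ u = n.+1) by lia. have n6 : ~ (t = n.+1 /\ u = 2) by lia.
have h2N : 2 <= n.+1 by lia.
split.
- apply: eq_imin => // v hv hs.
  + case: (sXY ht hu hv n1 n2 n3 n4 n5 n6 hs) => [h|[[-> [h _]]|[-> [h _]]]].
    * by exists v.
    * by exists 2; split => //; lia.
    * by exists 1.
  + case: (sYX ht hu hv n1 n2 n3 n4 n5 n6 hs) => [h|[[-> [h _]]|[-> [h _]]]].
    * by exists v.
    * by exists 2; split => //; lia.
    * by exists 1.
- apply: eq_imax => // v hv hs.
  + case: (sXY ht hu hv n1 n2 n3 n4 n5 n6 hs) => [h|[[-> [_ h]]|[-> [_ h]]]].
    * by exists v.
    * by exists n; split => //; lia.
    * by exists y; split => //; lia.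
  + case: (sYX ht hu hv n1 n2 n3 n4 n5 n6 hs) => [h|[[-> [_ h]]|[-> [_ h]]]].
    * by exists v.
    * by exists n; split => //; lia.
    * by exists y; split => //; lia.
Qed.

Lemma swap_same_direction t u : t <= n.+1 -> u <= n.+1 ->
  ~ (t = 2 /\ u = y) -> ~ (t = y /\ u = 2) ->
  (posn n X t < posn n X u) = (posn n Y t < posn n Y u).
Proof.
move=> ht hu n1 n2.
have cl := swap_posn_cases hy (or_introl (conj x2 xy)) hxy.
have pt := posn_le X t; have pu := posn_le X u.
case: (cl t ht) => [et|[et|[et1 et2 et3]]]; case: (cl u hu) => [eu|[eu|[eu1 eu2 eu3]]];
  (try subst t); (try subst u); rewrite ?x2 ?xy ?y2 ?yy ?et1 ?eu1; apply/idP/idP; lia.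
Qed.

End Swap.

Lemma exists_perm_entries n (f : nat -> nat) :
  (forall p, p <= n.+1 -> f p <= n.+1) ->
  (forall p q, p <= n.+1 -> q <= n.+1 -> f p = f q -> p = q) ->
  exists P : 'S_(n.+2), forall p, p <= n.+1 -> entry P p = f p.
Proof.
move=> f_le f_inj.
have inj : injective (fun i : 'I_n.+2 => (inord (f i) : 'I_n.+2)).
  have ltn_f (i : 'I_n.+2) : f i < n.+2 by rewrite ltnS f_le // -ltnS.
  move=> i j /(congr1 val) /=; rewrite !inordK ?ltn_f // => e.
  by apply: val_inj; apply: f_inj e; rewrite -ltnS.
by exists (perm inj) => p hp; rewrite /entry permE /= !inordK // ltnS f_le.
Qed.

Lemma valid_perm_entry n (P : 'S_(n.+2)) :
  entry P 0 = 0 -> entry P n.+1 = n.+1 -> valid_perm n P.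
Proof.
rewrite /entry => h0 hN; split; apply: val_inj.
- have -> : ord0 = inord 0 :> 'I_n.+2 by apply: val_inj; rewrite /= inordK.
  by rewrite h0 /= inordK.
- have -> : ord_max = inord n.+1 :> 'I_n.+2 by apply: val_inj; rewrite /= inordK.
  by rewrite hN /= inordK.
Qed.

(* The entries of [X] are [0, 3, ..., n - 1 (without y), 1, n, 2, y, n + 1];
   [Y] is [X] with [2] and [y] exchanged. *)
Definition swap_entry n y (swapped : bool) (p : nat) : nat :=
  if p == 0 then 0
  else if p <= n - 4 then (if p + 2 < y then p + 2 else p + 3)
  else if p == n - 3 then 1 else if p == n - 2 then n
  else if p == n.-1 then (if swapped then y else 2)
  else if p == n then (if swapped then 2 else y) else n.+1.

Section SwapPair.
Variables (n y : nat).
Hypotheses (hn : 4 <= n) (hy : 3 <= y <= n.-1).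

Lemma swap_entry_le b p : p <= n.+1 -> swap_entry n y b p <= n.+1.
Proof. by move=> hp; rewrite /swap_entry; case: b; repeat case: ifP => ?; lia. Qed.

Lemma swap_entry_inj b p q : p <= n.+1 -> q <= n.+1 ->
  swap_entry n y b p = swap_entry n y b q -> p = q.
Proof. by move=> hp hq; rewrite /swap_entry; case: b; repeat case: ifP => ?; lia. Qed.

Lemma swap_entry_same p : p != n.-1 -> p != n -> swap_entry n y true p = swap_entry n y false p.
Proof. by move=> /negbTE pa /negbTE pn; rewrite /swap_entry pa pn. Qed.

Lemma exists_swap_pair :
  exists X Y : 'S_(n.+2), [/\ valid_perm n X, valid_perm n Y, X != Y,
    [/\ posn n X 1 = n - 3, posn n X n = n - 2, posn n X 2 = n.-1 & posn n X y = n] /\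
    (posn n Y 2 = n /\ posn n Y y = n.-1) &
    forall z, z <= n.+1 -> z != 2 -> z != y -> posn n Y z = posn n X z].
Proof.
have [X eX] := exists_perm_entries (swap_entry_le false) (@swap_entry_inj false).
have [Y eY] := exists_perm_entries (swap_entry_le true) (@swap_entry_inj true).
have vX : valid_perm n X.
  by apply: valid_perm_entry; rewrite eX // /swap_entry; repeat case: ifP => ?; lia.
have vY : valid_perm n Y.
  by apply: valid_perm_entry; rewrite eY // /swap_entry; repeat case: ifP => ?; lia.
have pX p z : p <= n.+1 -> swap_entry n y false p = z -> posn n X z = p.
  by move=> hp <-; rewrite -eX ?posn_entry.
have pY p z : p <= n.+1 -> swap_entry n y true p = z -> posn n Y z = p.
  by move=> hp <-; rewrite -eY ?posn_entry.
have x2 : posn n X 2 = n.-1 by apply: pX; rewrite /swap_entry; repeat case: ifP => ?; lia.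
have y2 : posn n Y 2 = n by apply: pY; rewrite /swap_entry; repeat case: ifP => ?; lia.
exists X, Y; split => //.
- by apply/eqP => e; move: y2; rewrite -e x2; lia.
- by split; [split|split]; (apply: pX || apply: pY); rewrite /swap_entry;
    repeat case: ifP => ?; lia.
move=> z hz z2 zy; apply: pY; first exact: posn_le.
have hp := posn_le X z; rewrite -[RHS](entry_posn X hz) eX // swap_entry_same //.
- by apply: contra z2 => /eqP e; rewrite -(entry_posn X hz) eX // e /swap_entry;
    repeat case: ifP => ?; lia.
- by apply: contra zy => /eqP e; rewrite -(entry_posn X hz) eX // e /swap_entry;
    repeat case: ifP => ?; lia.
Qed.

End SwapPair.

Lemma swap_counterexample n y k : 4 <= n -> 3 <= y <= n.-1 -> k < n - y ->
  exists X Y : 'S_(n.+2), [/\ valid_perm n X, valid_perm n Y, X != Y,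
    same_profile n k X Y & (k < y - 2 -> same_dprofile n k X Y)].
Proof.
move=> hn hy hk.
have [X [Y [vX vY neqXY [[x1 xn x2 xy] [y2 yy]] hxy]]] := exists_swap_pair hn hy.
have same := swap_same_extrema hn hy vX vY x1 xn x2 xy y2 yy hxy.
exists X, Y; split => // [i t hi ht|hk2 i t hi ht]; first by apply: (same k); lia.
have [e1 e2] : imin n X t (t + i) = imin n Y t (t + i) /\ imax n X t (t + i) = imax n Y t (t + i).
  by apply: (same k); lia.
by split => //; apply: (swap_same_direction hn hy x1 xn x2 xy y2 yy hxy); lia.
Qed.

(* The first entries where [P] and [Q] differ occur in opposite orders. *)
Lemma dreconstructing_full n : dreconstructing n n.+1.
Proof.
move=> P Q vP vQ hPQ; apply/eqP; apply: contraT => neqPQ; exfalso.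
have [j] := exists_first_diff vP vQ neqPQ.
move: (entry P j) (entry Q j) (entry P j.-1) => a b c fd.
have qa := first_diff_posQa fd; have pb := first_diff_posQa (first_diff_sym fd).
case: fd => hj ha hb _ hab pa qb _ _ _.
case: (ltngtP a b) => [lt_ab|lt_ba|eab]; last by rewrite eab eqxx in hab.
- have [_ _] := hPQ (b - a) a ltac:(lia) ltac:(lia).
  by rewrite subnKC ?(ltnW lt_ab) // pa qb pb; move/esym/idP; lia.
- have [_ _] := hPQ (a - b) b ltac:(lia) ltac:(lia).
  by rewrite subnKC ?(ltnW lt_ba) // pa qb qa; move/idP; lia.
Qed.

Lemma reconstructing_dreconstructing n k : reconstructing n k -> dreconstructing n k.
Proof.
move=> hrec P Q vP vQ hPQ; apply: hrec => // i t hi ht.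
by case: (hPQ i t hi ht).
Qed.

Lemma exists_least (D : nat -> Prop) m : D m -> exists k, D k /\ forall k', k' < k -> ~ D k'.
Proof.
elim: m {-2}m (leqnn m) => [|m IHm] x le_xm Dx.
  by exists 0; move: le_xm Dx; rewrite leqn0 => /eqP ->.
case: (classic (exists2 x', x' <= m & D x')) => [[x' le_x'm Dx']|no_smaller].
  exact: IHm le_x'm Dx'.
by exists x; split => // k' lt_k'x Dk'; apply: no_smaller; exists k' => //; lia.
Qed.

Lemma is_ku_value n : 1 <= n -> is_ku n (maxn 1 (n - 3)).
Proof.
move=> hn; split; first lia.
  case: (leqP n 4) => hn4.
    by rewrite (_ : maxn 1 (n - 3) = 1); [apply: reconstructing_small|]; lia.
  by rewrite (_ : maxn 1 (n - 3) = n - 3); [apply: reconstructing_large|]; lia.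
move=> k hk hrec.
have [X [Y [vX vY neqXY hXY _]]] := @swap_counterexample n 3 k ltac:(lia) ltac:(lia) ltac:(lia).
by move: neqXY; rewrite (hrec X Y vX vY hXY) eqxx.
Qed.

Lemma exists_kd n : exists k, is_kd n k.
Proof.
have [k [[k1 Dk] least_k]] :=
  @exists_least (fun k => 1 <= k /\ dreconstructing n k) n.+1
    (conj isT (@dreconstructing_full n)).
exists k; split => //; last first.
  by move=> k' /andP [k'1 lt_k'k] Dk'; exact: least_k lt_k'k (conj k'1 Dk').
rewrite k1 /=; case: leqP => // lt_Nk.
by have := least_k _ lt_Nk (conj isT (@dreconstructing_full n)).
Qed.

Lemma kd_lower_bound n k : 4 <= n -> is_kd n k -> (n - 3 + 1) %/ 2 <= k.
Proof.
move=> hn [/andP [k1 _] hdrec _]; rewrite leqNgt; apply/negP => small_k.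
have [X [Y [vX vY neqXY _ hdXY]]] :=
  @swap_counterexample n (k + 3) k ltac:(lia) ltac:(lia) ltac:(lia).
by move: neqXY; rewrite (hdrec X Y vX vY (hdXY ltac:(lia))) eqxx.
Qed.

Lemma is_kd_small n : 1 <= n <= 3 -> is_kd n 1.
Proof.
move=> hn; split; [lia | | lia].
by apply: reconstructing_dreconstructing; apply: reconstructing_small; lia.
Qed.

Theorem theorem2 (n : nat) (hn : 1 <= n) :
  is_ku n (maxn 1 (n - 3)) /\
  (4 <= n -> (exists k, is_kd n k) /\
             forall k, is_kd n k -> (n - 3 + 1) %/ 2 <= k) /\
  (n <= 3 -> is_kd n 1).
Proof.
split; first exact: is_ku_value.
split; first by move=> hn4; split; [exact: exists_kd | move=> k; exact: kd_lower_bound].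
by move=> hn3; apply: is_kd_small; rewrite hn.
Qed.
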